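(* Let $(V,d,k,q)$ be an instance of the individually fair $k$-center with outliers problem (IF$k$CO) as defined in the context. Then the naive algorithm (Algorithm 1) described in the context outputs a feasible solution $(S,O,\sigma)$ for this instance, i.e. $|S|\le k$ and $|O|\le q$.
   Context: IF$k$CO instance: a finite set $V$ with $|V|=n$, a metric $d$ on $V$ (nonnegative, symmetric, $d_{ii}=0$, triangle inequality), and integers $k\ge1$ and $q\ge0$. A solution is $(S,O,\sigma)$ with $S\subseteq V$ (centers), $O\subseteq V$ (outliers), $\sigma:V\setminus O\to S$; it is feasible if $|S|\le k$ and $|O|\le q$. For $i\in V$, the neighborhood radius $NR(i)$ is the distance from $i$ to its $\lceil n/k\rceil$-th nearest neighbor in $V$, where $i$ counts as its own (first) nearest neighbor. Algorithm 1: set $P:=V$, $S:=\emptyset$. While $P\ne\emptyset$: pick $s\in P$ minimizing $NR(i)$ over $i\in P$; set $S:=S\cup\{s\}$ and $P:=\{i\in P: d_{is}>2\,NR(i)\}$. Then set $O:=\emptyset$ and, for each $i\in V$, let $\sigma(i)$ be a center $h\in S$ minimizing $d_{ih}$. Output $(S,O,\sigma)$. *)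

From HB Require Import structures.
From mathcomp Require Import all_boot all_order all_algebra.
Set Implicit Arguments. Unset Strict Implicit. Unset Printing Implicit Defensive.
Import Order.TTheory GRing.Theory Num.Theory.
Local Open Scope ring_scope.

Section IFkCO.
Variables (R : realDomainType) (V : finType) (d : V -> V -> R) (k : nat).

Definition is_metric : Prop :=
  [/\ forall i j, 0 <= d i j,
      forall i j, d i j = d j i,
      forall i, d i i = 0 &
      forall i j l, d i l <= d i j + d j l].

(* ceil(n/k) for k >= 1 *)
Definition ceil_div (n k : nat) : nat := ((n + k.-1) %/ k)%N.

(* NR(i): distance from i to its ceil(n/k)-th nearest neighbour in V
   (i itself, at distance d i i = 0, being the first), i.e. the
   ceil(n/k)-th smallest entry (counted with multiplicity) of the
   multiset of distances {d i j | j in V}. *)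
Definition NR (i : V) : R :=
  nth 0 (sort <=%R [seq d i j | j <- enum V]) (ceil_div #|V| k).-1.

(* One iteration of the while loop of Algorithm 1 on state (P, S). *)
Definition alg_step (st st' : {set V} * {set V}) : Prop :=
  let: (P, Sc) := st in
  exists2 s, s \in P &
    (forall i, i \in P -> NR s <= NR i) /\
    st' = ([set i in P | 2 * NR i < d i s], s |: Sc).

Inductive alg_reach : {set V} * {set V} -> {set V} * {set V} -> Prop :=
| reach_refl st : alg_reach st st
| reach_step st st' st'' :
    (st.1 != set0) -> alg_step st st' -> alg_reach st' st'' -> alg_reach st st''.

(* (S, O, sigma) is a possible output of Algorithm 1 (for any tie-breaking). *)
Definition alg1_output (Sc O : {set V}) (sigma : V -> V) : Prop :=
  [/\ alg_reach ([set: V], set0) (set0, Sc),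
      O = set0 &
      forall i, sigma i \in Sc /\ (forall h, h \in Sc -> d i (sigma i) <= d i h)].

Definition feasible (q : nat) (Sc O : {set V}) : Prop :=
  (#|Sc| <= k)%N /\ (#|O| <= q)%N.

End IFkCO.

(** Let m = ceil(n/k).  By definition of NR, every ball B(s) = {j | d s j <= NR s}
    contains at least m points.  A point selected later is still in P, hence lies
    at distance more than 2 NR(s) >= NR(s) + NR(t) from every earlier center t
    (which had the smallest radius at its turn), so the balls of the centers are
    pairwise disjoint.  Thus |S| m <= n <= m k, i.e. |S| <= k; and O is empty. *)

From HB Require Import structures.
From mathcomp Require Import all_boot all_order all_algebra.
From mathcomp Require Import zify lra.
Set Implicit Arguments. Unset Strict Implicit.
Import Order.TTheory GRing.Theory Num.Theory.
Local Open Scope ring_scope.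

Lemma ceil_div_gt0 n k : (0 < k)%N -> (0 < n)%N -> (0 < ceil_div n k)%N.
Proof. by move=> k_gt0 n_gt0; rewrite divn_gt0 //; lia. Qed.

Lemma ceil_div_leq n k : (0 < k)%N -> (ceil_div n k <= n)%N.
Proof. by move=> k_gt0; rewrite -ltnS ltn_divLR //; nia. Qed.

Lemma leq_ceil_div_mul n k : (0 < k)%N -> (n <= ceil_div n k * k)%N.
Proof.
move=> k_gt0; have := divn_eq (n + k.-1) k; have := ltn_pmod (n + k.-1) k_gt0.
rewrite /ceil_div; lia.
Qed.

Lemma sorted_count_le_nth disp (T : orderType disp) (x0 : T) (s : seq T) i :
  sorted <=%O s -> (i < size s)%N -> (i < count (<= nth x0 s i)%O s)%N.
Proof.
move=> s_sorted i_lt; rewrite ltnNge; apply/negP => cnt_le.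
by have := nth_count_gt x0 s_sorted (introT andP (conj cnt_le i_lt)); rewrite ltxx.
Qed.

Lemma card_set_count (T : finType) (P : pred T) :
  #|[set x | P x]| = count P (enum T).
Proof. by rewrite cardsE -sum1_card -sum1_count big_enum_cond. Qed.

Section NaiveAlgorithm.
Variables (R : realDomainType) (V : finType) (d : V -> V -> R) (k : nat).
Hypothesis d_metric : is_metric d.
Hypothesis k_gt0 : (0 < k)%N.

Local Notation NR := (NR d k).
Local Notation m := (ceil_div #|V| k).

Lemma NR_ge0 i : 0 <= NR i.
Proof.
rewrite /NR; set s := sort _ _.
have [m_lt|m_ge] := ltnP m.-1 (size s); last by rewrite nth_default.
have : nth 0 s m.-1 \in s by exact: mem_nth.
by rewrite mem_sort => /mapP [j _ ->]; case: d_metric.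
Qed.

Definition ball s := [set j | d s j <= NR s].

Lemma card_ball s : (m <= #|ball s|)%N.
Proof.
have m_gt0 : (0 < m)%N by apply/ceil_div_gt0/card_gt0P => //; exists s.
set L := sort <=%R [seq d s j | j <- enum V].
have size_L : size L = #|V| by rewrite size_sort size_map -cardE.
have -> : #|ball s| = count (<= NR s) L.
  by rewrite card_set_count (permP (permEl (perm_sort _ _))) [RHS]count_map.
rewrite -(prednK m_gt0) /NR -/L; apply: sorted_count_le_nth.
  exact/sort_sorted/le_total.
by rewrite size_L prednK //; exact: ceil_div_leq.
Qed.

Lemma disjoint_ball s t : NR s + NR t < d s t -> [disjoint ball s & ball t].
Proof.
case: d_metric => _ d_sym _ d_tri st_far; apply/pred0P => j; rewrite !inE.
apply/negP => /andP [sj tj]; have := d_tri s j t; rewrite (d_sym j t); lra.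
Qed.

Definition loop_invariant (st : {set V} * {set V}) : Prop :=
  let: (P, Sc) := st in
  (forall t i, t \in Sc -> i \in P -> NR t <= NR i /\ 2 * NR i < d i t) /\
  (#|Sc| * m <= #|\bigcup_(t in Sc) ball t|)%N.

Lemma loop_invariant_step st st' :
  loop_invariant st -> alg_step d k st st' -> loop_invariant st'.
Proof.
case: st => P Sc [far packing] [s sP [s_min ->]].
have s_new : s \notin Sc.
  apply/negP => sSc; have [_] := far s s sSc sP.
  by case: d_metric => _ _ -> _; have := NR_ge0 s; lra.
split=> [t i|].
  rewrite in_setU1 inE => /orP [/eqP -> | tSc] /andP [iP i_far]; last exact: far.
  by split; first exact: s_min.
have disj : ball s :&: \bigcup_(t in Sc) ball t = set0.
  apply/eqP; rewrite setI_eq0; apply: bigcup_disjoint => t tSc; apply: disjoint_ball.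
  by have [t_min s_far] := far t s tSc sP; lra.
rewrite cardsU1 s_new big_setU1 //= cardsU disj cards0 subn0.
by rewrite mulSn leq_add // card_ball.
Qed.

Lemma loop_invariant_reach st st' :
  alg_reach d k st st' -> loop_invariant st -> loop_invariant st'.
Proof.
by elim=> // st1 st2 st3 _ step _ IH inv1; apply: IH; exact: loop_invariant_step step.
Qed.

Lemma loop_invariant_init : loop_invariant ([set: V], set0).
Proof. by split=> [t i|]; rewrite ?inE ?cards0. Qed.

End NaiveAlgorithm.

Theorem lemma1 (R : realDomainType) (V : finType) (d : V -> V -> R)
  (k q : nat) (Sc O : {set V}) (sigma : V -> V) :
  is_metric d -> (1 <= k)%N ->
  alg1_output d k Sc O sigma ->
  feasible k q Sc O.
Proof.
move=> d_metric k_gt0 [reach -> _]; split; last by rewrite cards0.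
have [_ packing] := loop_invariant_reach d_metric k_gt0 reach
  (loop_invariant_init d k).
have [V0|V_gt0] := posnP #|V|; first by rewrite (leq_trans (max_card _)) // V0.
rewrite -(leq_pmul2r (ceil_div_gt0 k_gt0 V_gt0)) (leq_trans packing) //.
by rewrite (leq_trans (max_card _)) // mulnC leq_ceil_div_mul.
Qed.
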